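(* Consider the one-stage ANC game described in the context, at a given initial pair $(x,s)$. Suppose that for every $x\in\mathbb{R}^n$, $a\in\mathcal{A}$ the functions $u\mapsto\Sigma(F(x,0),u,a)$ and $u\mapsto\Sigma(F(x,u),u,a)$ are continuous, coercive and convex on $\mathbb{R}^m$. Suppose further that there is a reserved action $a_\circ\in\mathcal{A}$, $a_\circ\ne1$, such that for any $j,k\in\mathcal{A}\setminus\{a_\circ\}$ with $j<k$ one has $h^{x,s}_j(u)>h^{x,s}_k(u)$ for all $u\in\mathring{U}(x)$. Suppose that there exists $u^*=u^*(x,s)\in\mathring{U}(x)$ such that (a) $h^{x,s}_1(u^* )=h^{x,s}_{a_\circ}(u^* )$; (b) for all $u\ne u^*$, $h^{x,s}_1(u)>h^{x,s}_1(u^* )$ or $h^{x,s}_{a_\circ}(u)>h^{x,s}_{a_\circ}(u^* )$; (c) $u^*$ is not a minimum of $h^{x,s}_1(\cdot)$ nor of $h^{x,s}_{a_\circ}(\cdot)$. Then the game admits a non-pure saddle point $(u^*,p^* )$ with $p^*$ supported on $\{1,a_\circ\}$.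
   Context: Setting (one-stage ANC game). Let $\mathcal{F}=\{1,\dots,|\mathcal{F}|\}$ be a finite set of regimes and $\mathcal{A}=\{1,\dots,N\}$ a finite set of jammer actions; for each $a$ let $P(a)$ be an $|\mathcal{F}|\times|\mathcal{F}|$ row-stochastic matrix; $q\in[0,1]^{|\mathcal{F}|}$. Let $F:\mathbb{R}^n\times\mathbb{R}^m\to\mathbb{R}^n$, $\sigma^0,\sigma^1,g^0$ real-valued on $\mathbb{R}^n\times\mathbb{R}^m$, $\mathbb{R}^n$, $\mathcal{A}\times\mathcal{F}$ respectively. For plant state $x$ and regime $s$, the controller chooses $u\in\mathbb{R}^m$, the jammer chooses $p\in\mathcal{S}_{N-1}$ (unit simplex in $\mathbb{R}^N$); $a\sim p$, $\mathrm{Pr}(s^+=i)=P_{si}(a)$, $\mathrm{Pr}(b=1\mid s^+)=q_{s^+}$, $x^+=F(x,bu)$; payoff $\Sigma(x^+,u,a)=\sigma^0(x,u)+\sigma^1(x^+)-g^0(a,s)$ with expectation $p'h^{x,s}(u)$, $h^{x,s}_i(u)=(P(i)q)_s\Sigma(F(x,u),u,i)+(1-(P(i)q)_s)\Sigma(F(x,0),u,i)$. $J_1=\inf_{u}\sup_pp'h^{x,s}(u)$, $J_2=\sup_p\inf_up'h^{x,s}(u)$. $U(x)\subset\mathbb{R}^m$ is a compact set containing the controller's optimal response and satisfying $J_1=\inf_{u\in U(x)}\sup_pp'h^{x,s}(u)=\sup_p\inf_{u\in U(x)}p'h^{x,s}(u)=J_2$ (such a set exists under the stated continuity/coercivity/convexity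 assumption); $\mathring{U}(x)$ is its interior. A saddle point is $(u^*,p^* )$ with $p'h^{x,s}(u^* )\le(p^* )'h^{x,s}(u^* )\le(p^* )'h^{x,s}(u)$ for all $u,p$; non-pure means $p^*$ has at least two positive components; supported on a set means zero outside it. Coercive: $h(u)\ge\eta(\|u\|)$ with $\eta(y)\to+\infty$. *)

From HB Require Import structures.
From mathcomp Require Import all_boot all_order all_algebra.
From mathcomp Require Import all_classical all_reals all_analysis.
Set Implicit Arguments. Unset Strict Implicit. Unset Printing Implicit Defensive.
Import Order.TTheory GRing.Theory Num.Theory.
Import numFieldNormedType.Exports.
Local Open Scope classical_set_scope.
Local Open Scope ring_scope.

Section ANC.
Variable R : realType.

(* Jammer actions are 'I_N.+1; the paper's action 1 is ord0, action k is k-1. *)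

Definition simplex N : set ('I_N.+1 -> R) :=
  [set p | (forall i, 0 <= p i) /\ \sum_(i < N.+1) p i = 1].
Arguments simplex N : clear implicits.

Definition Sigma (n m N S : nat) (sigma0 : 'rV[R]_n -> 'rV[R]_m -> R)
  (sigma1 : 'rV[R]_n -> R) (g0 : 'I_N.+1 -> 'I_S -> R)
  (x : 'rV[R]_n) (s : 'I_S) (xp : 'rV[R]_n) (u : 'rV[R]_m) (a : 'I_N.+1) : R :=
  sigma0 x u + sigma1 xp - g0 a s.

Definition hfun (n m N S : nat) (F : 'rV[R]_n -> 'rV[R]_m -> 'rV[R]_n)
  (sigma0 : 'rV[R]_n -> 'rV[R]_m -> R) (sigma1 : 'rV[R]_n -> R)
  (g0 : 'I_N.+1 -> 'I_S -> R) (P : 'I_N.+1 -> 'M[R]_S) (q : 'cV[R]_S)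
  (x : 'rV[R]_n) (s : 'I_S) (i : 'I_N.+1) (u : 'rV[R]_m) : R :=
  let c := (P i *m q) s ord0 in
  c * Sigma sigma0 sigma1 g0 x s (F x u) u i
  + (1 - c) * Sigma sigma0 sigma1 g0 x s (F x 0) u i.

Definition pdot (m N : nat) (h : 'I_N.+1 -> 'rV[R]_m -> R)
  (p : 'I_N.+1 -> R) (u : 'rV[R]_m) : R := \sum_(i < N.+1) p i * h i u.

Definition convex_fun (m : nat) (f : 'rV[R]_m -> R) : Prop :=
  forall (u v : 'rV[R]_m) (t : R), 0 <= t <= 1 ->
    f (t *: u + (1 - t) *: v) <= t * f u + (1 - t) * f v.

Definition coercive (m : nat) (f : 'rV[R]_m -> R) : Prop :=
  exists eta : R -> R, eta @ +oo --> +oo /\ forall u, eta `|u| <= f u.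

Definition supP (m N : nat) (h : 'I_N.+1 -> 'rV[R]_m -> R) (u : 'rV[R]_m)
  : \bar R := ereal_sup [set (pdot h p u)%:E | p in simplex N].

Definition infU (m N : nat) (h : 'I_N.+1 -> 'rV[R]_m -> R)
  (D : set 'rV[R]_m) (p : 'I_N.+1 -> R) : \bar R :=
  ereal_inf [set (pdot h p u)%:E | u in D].

Definition upper_value (m N : nat) (h : 'I_N.+1 -> 'rV[R]_m -> R)
  (D : set 'rV[R]_m) : \bar R := ereal_inf (supP h @` D).

Definition lower_value (m N : nat) (h : 'I_N.+1 -> 'rV[R]_m -> R)
  (D : set 'rV[R]_m) : \bar R := ereal_sup (infU h D @` simplex N).

Definition saddle_point (m N : nat) (h : 'I_N.+1 -> 'rV[R]_m -> R)
  (us : 'rV[R]_m) (ps : 'I_N.+1 -> R) : Prop :=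
  simplex N ps /\
  (forall p, simplex N p -> pdot h p us <= pdot h ps us) /\
  (forall u, pdot h ps us <= pdot h ps u).

Definition non_pure (N : nat) (p : 'I_N.+1 -> R) : Prop :=
  exists i j, i != j /\ 0 < p i /\ 0 < p j.

Definition supported_on (N : nat) (p : 'I_N.+1 -> R) (A : set 'I_N.+1) : Prop :=
  forall i, ~ A i -> p i = 0.

End ANC.
Arguments simplex {R} N.

From HB Require Import structures.
From mathcomp Require Import all_boot all_order all_algebra.
From mathcomp Require Import all_classical all_reals all_analysis.
From mathcomp Require Import ring lra.
Import Order.TTheory GRing.Theory Num.Theory.
Import numFieldNormedType.Exports.
Local Open Scope classical_set_scope.
Local Open Scope ring_scope.

(* Write f := h_1, g := h_{a0} and v := f us = g us.  Both are convex, and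
   (b) says that no u lowers one of them without raising the other.  Hence
   every ratio (v - g u) / (f u - v) taken where g u < v is bounded by every
   ratio (g u - v) / (v - f u) taken where f u < v: otherwise some point of
   the segment between the two witnesses would lower both f and g.  By (c)
   both families are nonempty, so a multiplier lam > 0 fits in between, and
   then lam (f - v) + (g - v) >= 0 everywhere.  With t := lam / (1 + lam),
   us therefore minimises t f + (1 - t) g, while the ordering hypothesis puts
   every other action strictly below v at us, so the mixed strategy giving
   weight t to action 1 and 1 - t to a0 is a best response to us. *)

Lemma convex_fun_conic (R : realType) m (f g : 'rV[R]_m -> R) (c d : R) :
  0 <= c -> 0 <= d -> convex_fun f -> convex_fun g ->
  convex_fun (fun u => c * f u + d * g u).
Proof.
move=> c0 d0 cf cg u w t t01.
have -> : t * (c * f u + d * g u) + (1 - t) * (c * f w + d * g w) =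
  c * (t * f u + (1 - t) * f w) + d * (t * g u + (1 - t) * g w) by ring.
exact: lerD (ler_wpM2l c0 (cf u w t t01)) (ler_wpM2l d0 (cg u w t t01)).
Qed.

Lemma row_stochastic_mulmx_ge0_le1 (R : numDomainType) k S
    (M : 'M[R]_(k, S)) (q : 'cV[R]_S) (i : 'I_k) :
  (forall i j, 0 <= M i j) -> (forall i, \sum_j M i j = 1) ->
  (forall j, 0 <= q j ord0 <= 1) ->
  0 <= (M *m q) i ord0 <= 1.
Proof.
move=> M0 M1 q01; rewrite mxE; apply/andP; split.
  by apply: sumr_ge0 => j _; rewrite mulr_ge0 // (andP (q01 j)).1.
rewrite -(M1 i); apply: ler_sum => j _.
by rewrite ler_piMr // (andP (q01 j)).2.
Qed.

Lemma hfun_convex (R : realType) n m N S (F : 'rV[R]_n -> 'rV[R]_m -> 'rV[R]_n)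
    sigma0 sigma1 (g0 : 'I_N.+1 -> 'I_S -> R)
    (P : 'I_N.+1 -> 'M[R]_S) (q : 'cV[R]_S) x s i :
  (forall r c, 0 <= P i r c) -> (forall r, \sum_c P i r c = 1) ->
  (forall j, 0 <= q j ord0 <= 1) ->
  convex_fun (fun u => Sigma sigma0 sigma1 g0 x s (F x u) u i) ->
  convex_fun (fun u => Sigma sigma0 sigma1 g0 x s (F x 0) u i) ->
  convex_fun (hfun F sigma0 sigma1 g0 P q x s i).
Proof.
move=> P0 P1 q01 cvx1 cvx0.
have /andP[c0 c1] : 0 <= (P i *m q) s ord0 <= 1 by exact: row_stochastic_mulmx_ge0_le1.
by apply: convex_fun_conic cvx1 cvx0; rewrite ?subr_ge0.
Qed.

Lemma convex_comb_zero_neg (R : realFieldType) (a1 a2 b1 b2 : R) :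
  a1 < 0 -> 0 < b1 -> a2 * b1 < a1 * b2 ->
  exists2 t, 0 <= t <= 1 & t * a1 + (1 - t) * b1 = 0 /\ t * a2 + (1 - t) * b2 < 0.
Proof.
move=> a1_neg b1_pos cross.
have d_pos : 0 < b1 - a1 by lra.
have d_neq0 : b1 - a1 != 0 by rewrite gt_eqF.
exists (b1 / (b1 - a1)).
  apply/andP; split; first by rewrite divr_ge0 ?ltW.
  by rewrite ler_pdivrMr // mul1r; lra.
split; first by field.
have -> : b1 / (b1 - a1) * a2 + (1 - b1 / (b1 - a1)) * b2 =
  (a2 * b1 - a1 * b2) / (b1 - a1) by field.
by rewrite pmulr_llt0 ?invr_gt0 // subr_lt0.
Qed.

Section TwoConvexCriteria.
Context {R : realType} {m : nat} {f g : 'rV[R]_m -> R} {us : 'rV[R]_m} {v : R}.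
Hypotheses (f_convex : convex_fun f) (g_convex : convex_fun g).
Hypotheses (f_us : f us = v) (g_us : g us = v).
Hypothesis us_pareto : forall u, u != us -> f us < f u \/ g us < g u.

Lemma pareto_g_descent u : g u < v -> v < f u.
Proof.
move=> gu; have u_neq : u != us by apply: contraTneq gu => ->; rewrite g_us ltxx.
by case: (us_pareto _ u_neq); rewrite ?f_us ?g_us // => /ltW; rewrite leNgt gu.
Qed.

Lemma descent_ratios_cross uA uB : f uA < v -> g uB < v ->
  (v - g uB) * (v - f uA) <= (g uA - v) * (f uB - v).
Proof.
move=> fA gB; rewrite leNgt; apply/negP => cross.
have fB := pareto_g_descent _ gB.
have [t t01 [f_root g_neg]] :
    exists2 t, 0 <= t <= 1 & t * (f uA - v) + (1 - t) * (f uB - v) = 0 /\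
                             t * (g uA - v) + (1 - t) * (g uB - v) < 0.
  by apply: convex_comb_zero_neg; [rewrite subr_lt0 | rewrite subr_gt0 | lra].
have fw : f (t *: uA + (1 - t) *: uB) <= v.
  by have := f_convex uA uB t t01; lra.
have gw : g (t *: uA + (1 - t) *: uB) < v.
  by have := g_convex uA uB t t01; lra.
by move: fw; rewrite leNgt pareto_g_descent.
Qed.

Let descent_ratios := [set (v - g u) / (f u - v) | u in [set u | g u < v]].

Lemma descent_ratios_ub u : f u < v -> ubound descent_ratios ((g u - v) / (v - f u)).
Proof.
move=> fu _ [w gw <-].
have fw := pareto_g_descent _ gw.
rewrite ler_pdivrMr ?subr_gt0 // mulrAC ler_pdivlMr ?subr_gt0 //.
exact: descent_ratios_cross.
Qed.

Lemma pareto_multiplier : (exists uA, f uA < v) -> (exists uB, g uB < v) ->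
  exists2 lam, 0 < lam & forall u, 0 <= lam * (f u - v) + (g u - v).
Proof.
move=> [uA fA] [uB gB].
have ratio_uB : descent_ratios ((v - g uB) / (f uB - v)) by exists uB.
have ratio_uB_gt0 : 0 < (v - g uB) / (f uB - v).
  by rewrite divr_gt0 // subr_gt0 // pareto_g_descent.
have ratios_ub : has_ubound descent_ratios.
  by exists ((g uA - v) / (v - f uA)); exact: descent_ratios_ub.
have le_sup : ubound descent_ratios (sup descent_ratios) := ub_le_sup ratios_ub.
have sup_gt0 : 0 < sup descent_ratios := lt_le_trans ratio_uB_gt0 (le_sup _ ratio_uB).
exists (sup descent_ratios) => // u.
have [fu|fu] := ltP (f u) v.
  have := ge_sup (ex_intro _ _ ratio_uB) (descent_ratios_ub _ fu).
  by rewrite ler_pdivlMr ?subr_gt0 //; lra.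
have [gu|gu] := ltP (g u) v; last by nra.
have fu_gt := pareto_g_descent _ gu.
have : descent_ratios ((v - g u) / (f u - v)) by exists u.
by move=> /le_sup; rewrite ler_pdivrMr ?subr_gt0 //; lra.
Qed.

Lemma pareto_weights : (exists uA, f uA < v) -> (exists uB, g uB < v) ->
  exists2 t, 0 < t < 1 & forall u, v <= t * f u + (1 - t) * g u.
Proof.
move=> fA gB; have [lam lam_gt0 lam_sep] := pareto_multiplier fA gB.
have lam1_gt0 : 0 < 1 + lam by lra.
have lam1_neq0 : 1 + lam != 0 by rewrite gt_eqF.
exists (lam / (1 + lam)) => [|u].
  by rewrite divr_gt0 //= ltr_pdivrMr // mul1r; lra.
rewrite -subr_ge0.
have -> : lam / (1 + lam) * f u + (1 - lam / (1 + lam)) * g u - v =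
  (lam * (f u - v) + (g u - v)) / (1 + lam) by field.
by rewrite divr_ge0 // ltW.
Qed.

End TwoConvexCriteria.

Lemma pdot_le_max (R : realType) N m (h : 'I_N.+1 -> 'rV[R]_m -> R) p u (v : R) :
  simplex N p -> (forall i, h i u <= v) -> pdot h p u <= v.
Proof.
move=> [p_ge0 p_sum1] h_le; rewrite /pdot -[leRHS]mul1r -p_sum1 mulr_suml.
by apply: ler_sum => i _; rewrite ler_wpM2l.
Qed.

Section TwoPointStrategy.
Context {R : realType} {N : nat} (a b : 'I_N.+1).
Hypothesis a_neq_b : a != b.

Definition two_point (t : R) (i : 'I_N.+1) : R :=
  if i == a then t else if i == b then 1 - t else 0.

Lemma sum_two_point t (c : 'I_N.+1 -> R) :
  \sum_i two_point t i * c i = t * c a + (1 - t) * c b.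
Proof.
rewrite (bigD1 a) // (bigD1 b) 1?eq_sym //= big1 => [|i /andP[/negbTE ia /negbTE ib]].
  by rewrite /two_point eqxx eq_sym (negbTE a_neq_b) eqxx addr0.
by rewrite /two_point ia ib mul0r.
Qed.

Lemma two_point_simplex t : 0 <= t <= 1 -> simplex N (two_point t).
Proof.
move=> /andP[t_ge0 t_le1]; split.
  by move=> i; rewrite /two_point; case: ifP => // _; case: ifP; rewrite ?subr_ge0.
under eq_bigr => i _ do rewrite -[two_point t i]mulr1.
by rewrite sum_two_point !mulr1 subrKC.
Qed.

Lemma two_point_non_pure t : 0 < t < 1 -> non_pure (two_point t).
Proof.
move=> /andP[t_gt0 t_lt1]; exists a, b; split => //.
by rewrite /two_point eqxx eq_sym (negbTE a_neq_b) eqxx subr_gt0.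
Qed.

Lemma two_point_supported t : supported_on (two_point t) [set a; b].
Proof.
move=> i i_out; rewrite /two_point.
by case: eqP => [i_a|_]; [case: i_out; left | case: eqP => // i_b; case: i_out; right].
Qed.

Lemma two_point_saddle m (h : 'I_N.+1 -> 'rV[R]_m -> R) us t :
  0 <= t <= 1 -> (forall i, h i us <= h a us) -> h b us = h a us ->
  (forall u, h a us <= t * h a u + (1 - t) * h b u) ->
  saddle_point h us (two_point t).
Proof.
move=> t01 h_max hb_us us_min.
have pdot_two u : pdot h (two_point t) u = t * h a u + (1 - t) * h b u.
  exact: sum_two_point.
split; first exact: two_point_simplex.
split=> [p p_simplex|u]; rewrite !pdot_two hb_us.
  by rewrite -mulrDl subrKC mul1r; apply: pdot_le_max.
by rewrite -mulrDl subrKC mul1r.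
Qed.

End TwoPointStrategy.

Theorem corollary1 (R : realType) (n m N S : nat)
  (F : 'rV[R]_n -> 'rV[R]_m -> 'rV[R]_n)
  (sigma0 : 'rV[R]_n -> 'rV[R]_m -> R) (sigma1 : 'rV[R]_n -> R)
  (g0 : 'I_N.+1 -> 'I_S -> R) (P : 'I_N.+1 -> 'M[R]_S) (q : 'cV[R]_S)
  (x : 'rV[R]_n) (s : 'I_S) (U : set 'rV[R]_m) (a0 : 'I_N.+1) (us : 'rV[R]_m) :
  (* P(a) row-stochastic, q in [0,1]^|F| *)
  (forall a i j, 0 <= P a i j) ->
  (forall a i, \sum_(j < S) P a i j = 1) ->
  (forall i, 0 <= q i ord0 <= 1) ->
  (* continuity, coercivity, convexity in u *)
  (forall (y : 'rV[R]_n) (a : 'I_N.+1),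
     let f0 := fun u => Sigma sigma0 sigma1 g0 y s (F y 0) u a in
     let f1 := fun u => Sigma sigma0 sigma1 g0 y s (F y u) u a in
     (continuous f0 /\ coercive f0 /\ convex_fun f0) /\
     (continuous f1 /\ coercive f1 /\ convex_fun f1)) ->
  let h := hfun F sigma0 sigma1 g0 P q x s in
  (* U = U(x): compact, contains the controller's optimal responses,
     and the min-max values over U coincide with J1 and J2 *)
  compact U ->
  (forall u, supP h u = upper_value h setT -> U u) ->
  upper_value h setT = upper_value h U ->
  upper_value h U = lower_value h U ->
  lower_value h U = lower_value h setT ->
  (* reserved action a0 <> 1 *)
  a0 != ord0 ->
  (forall j k : 'I_N.+1, j != a0 -> k != a0 -> (j < k)%N ->
     forall u, interior U u -> h j u > h k u) ->
  interior U us ->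
  h ord0 us = h a0 us ->
  (forall u, u != us -> h ord0 u > h ord0 us \/ h a0 u > h a0 us) ->
  ~ (forall u, h ord0 us <= h ord0 u) ->
  ~ (forall u, h a0 us <= h a0 u) ->
  exists ps : 'I_N.+1 -> R,
    saddle_point h us ps /\ non_pure ps /\ supported_on ps [set ord0; a0].
Proof.
(* Compactness of U and the min-max identities only pin down the value of the
   game; the saddle inequalities are checked directly over all of R^m. *)
move=> P_ge0 P_sum1 q01 Sigma_props h _ _ _ _ _ a0_neq0 h_ordered us_int h_us pareto
  not_min1 not_min_a0.
have ord0_neq_a0 : ord0 != a0 by rewrite eq_sym.
have h_convex i : convex_fun (h i).
  have [[_ [_ cvx0]] [_ [_ cvx1]]] := Sigma_props x i.
  exact: hfun_convex (P_ge0 i) (P_sum1 i) q01 cvx1 cvx0.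
have descent k : ~ (forall u, h k us <= h k u) -> exists u, h k u < h k us.
  by move=> /existsNP[u /negP]; rewrite -ltNge; exists u.
have others_below i : h i us <= h ord0 us.
  have [->|i_neq0] := eqVneq i ord0; first exact: lexx.
  have [->|i_neq_a0] := eqVneq i a0; first by rewrite h_us.
  apply/ltW/h_ordered => //.
  by rewrite lt0n; apply: contraNneq i_neq0 => i0; exact/eqP/val_inj.
have descent_a0 : exists u, h a0 u < h ord0 us by rewrite h_us; apply: descent.
have [t t01 us_min] := pareto_weights (h_convex ord0) (h_convex a0) erefl
  (esym h_us) pareto (descent _ not_min1) descent_a0.
exists (two_point ord0 a0 t); split; last split.
- apply: two_point_saddle => //.
  by case/andP: t01 => t_gt0 t_lt1; rewrite !ltW.
- exact: two_point_non_pure.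
- exact: two_point_supported.
Qed.
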